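(* For each $\rho\in\sigma(1)$, the vector $\Pi_\rho:=\pi_2^*(\chi_\rho)\in\mathbb{Z}(Q)^\vee$ is an extremal perfect matching of $Q$. Moreover, for every arrow $a\in Q_1$, $a\in\operatorname{supp}(\Pi_\rho)$ if and only if $x_\rho$ divides $x^{\operatorname{div}(a)}$.
   Context: Let $\mathbb{k}$ be an algebraically closed field and $X=\operatorname{Spec}R$ a normal affine toric variety of dimension $n$ with a torus-fixed point, $R=\mathbb{k}[\sigma^\vee\cap M]$, $\sigma\subset N\otimes\mathbb{R}$ strongly convex rational polyhedral, $N=M^\vee$. Let $\sigma(1)$ be the rays, $d=|\sigma(1)|$, $v_\rho$ primitive generators, $D_\rho$ toric prime divisors, torus-invariant divisors identified with $\mathbb{Z}^d$ with standard basis $\chi_\rho$ (and dual basis also denoted $\chi_\rho$); exact sequence $0\to M\to\mathbb{Z}^d\xrightarrow{\deg}\operatorname{Cl}(X)\to0$, $u\mapsto\sum_\rho\langle u,v_\rho\rangle D_\rho$. Cox ring $\mathbb{k}[x_\rho]$, $x^D=\prod x_\rho^{D_\rho}$. Let $\mathscr{E}=(E_0=\mathcal{O}_X,E_1,\dots,E_r)$ be pairwise distinct rank one reflexive sheaves, $E_i=\mathcal{O}_X(D_i')$, and $Q$ its quiver of sections: vertices $0,\dots,r$; an arrow $a:i\to j$ with label $\operatorname{div}(a)\in\mathbb{N}^d$ for each irreducible $T_M$-invariant section $x^{\operatorname{div}(a)}$ of $\operatorname{Hom}(E_i,E_j)\cong H^0(\mathcal{O}_X(D_j'-D_i'))$ (irreducible: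 not in the image of multiplication through any $E_k$, $k\neq i,j$). $\operatorname{Wt}(Q)=\{\theta\in\mathbb{Z}^{Q_0}:\sum\theta_i=0\}$; $\pi:\mathbb{Z}^{Q_1}\to\operatorname{Wt}(Q)\oplus\mathbb{Z}^d$, $\chi_a\mapsto(\chi_{\mathsf{h}(a)}-\chi_{\mathsf{t}(a)},\operatorname{div}(a))$; $\mathbb{Z}(Q)=\pi(\mathbb{Z}^{Q_1})$, $\mathbb{N}(Q)=\pi(\mathbb{N}^{Q_1})$; $\pi_1,\pi_2$ the projections to $\operatorname{Wt}(Q)$ and $\mathbb{Z}^d$, and $\pi_2^*:(\mathbb{Z}^d)^\vee\to\mathbb{Z}(Q)^\vee$ the dual of $\pi_2$. The restriction of $\pi_2$ to $\ker\pi_1$ is an isomorphism onto the image of $M$; let $\psi:M\to\mathbb{Z}(Q)$ be the resulting injection, with dual $\psi^*:\mathbb{Z}(Q)^\vee\to N$. Let $C=\{v\in\mathbb{Z}(Q)^\vee\otimes\mathbb{R}:\langle v,\pi(\chi_a)\rangle\ge0\ \forall a\in Q_1\}$. A perfect matching of $Q$ is the primitive lattice point on a one-dimensional face of $C$; it is extremal if $\psi^*(\Pi)=v_\rho$ for some $\rho\in\sigma(1)$. Its support is $\operatorname{supp}(\Pi)=\{a\in Q_1:\langle\Pi,\pi(\chi_a)\rangle>0\}$. *)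

From HB Require Import structures.
From mathcomp Require Import all_boot all_order all_algebra.
From mathcomp Require Import reals.
Set Implicit Arguments. Unset Strict Implicit. Unset Printing Implicit Defensive.
Import Order.TTheory GRing.Theory Num.Theory.
Local Open Scope ring_scope.

Section Toric.
Variables (R : realType) (n d : nat) (v : 'I_d -> 'I_n -> int).
(* N = M = Z^n; v rho = primitive generator of the ray rho, rho : 'I_d *)

Definition dotM (u w : 'I_n -> int) : int := \sum_(k < n) u k * w k.

(* the map M -> Z^d, u |-> sum_rho <u, v_rho> D_rho *)
Definition divM (u : 'I_n -> int) : 'I_d -> int := fun rho => dotM u (v rho).

(* a torus-invariant divisor is linearly equivalent to 0 (lies in the image of M) *)
Definition principal (D : 'I_d -> int) : Prop :=
  exists u : 'I_n -> int, forall rho, D rho = divM u rho.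

Definition effective (D : 'I_d -> int) : Prop := forall rho, 0 <= D rho.

Definition in_sigma (x : 'I_n -> R) : Prop :=
  exists lam : 'I_d -> R, (forall rho, 0 <= lam rho) /\
    forall k, x k = \sum_(rho < d) lam rho * (v rho k)%:~R.

Definition primitive_vec (w : 'I_n -> int) : Prop :=
  forall (c : int) (w' : 'I_n -> int), (forall k, w k = c * w' k) -> c = 1 \/ c = -1.

Definition toric_cone_data : Prop :=
  (forall rho, primitive_vec (v rho)) /\
  (* each v rho spans a ray of sigma: it is not in the cone spanned by the others *)
  (forall rho, ~ exists lam : 'I_d -> R, (forall rho', 0 <= lam rho') /\ lam rho = 0 /\
        forall k, (v rho k)%:~R = \sum_(rho' < d) lam rho' * (v rho' k)%:~R) /\
  (forall x, in_sigma x -> in_sigma (fun k => - x k) -> forall k, x k = 0) /\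
  (* full-dimensional (X has a torus-fixed point) *)
  (forall u : 'I_n -> R, (forall rho, \sum_(k < n) u k * (v rho k)%:~R = 0) ->
      forall k, u k = 0).

(* ---- the collection of rank one reflexive sheaves E_i = O_X(D' i) ---- *)
Variables (r : nat) (D' : 'I_r.+1 -> 'I_d -> int).

(* T_M-invariant sections x^E of Hom(E_i,E_j) = H^0(O_X(D'_j - D'_i)):
   E effective and E linearly equivalent to D'_j - D'_i *)
Definition sect (i j : 'I_r.+1) (E : 'I_d -> int) : Prop :=
  effective E /\ principal (fun rho => E rho - (D' j rho - D' i rho)).

Definition nonzero_div (E : 'I_d -> int) : Prop := exists rho, E rho != 0.

Definition irreducible (i j : 'I_r.+1) (E : 'I_d -> int) : Prop :=
  sect i j E /\ nonzero_div E /\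
  ~ exists (k : 'I_r.+1) (E1 E2 : 'I_d -> int),
      [/\ sect i k E1, sect k j E2, nonzero_div E1, nonzero_div E2 &
          forall rho, E rho = E1 rho + E2 rho].

Record arrow := Arrow {
  tl : 'I_r.+1; hd : 'I_r.+1; lab : 'I_d -> int; arrow_irr : irreducible tl hd lab }.

(* the ambient lattice Z^{Q_0} (+) Z^d, containing Wt(Q) (+) Z^d *)
Definition lat : Type := ('I_r.+1 -> int) * ('I_d -> int).

Definition addL (x y : lat) : lat := (fun k => x.1 k + y.1 k, fun rho => x.2 rho + y.2 rho).

Definition piA (a : arrow) : lat :=
  (fun k => ((k == hd a)%:R - (k == tl a)%:R : int), lab a).

Definition ZQ (x : lat) : Prop :=
  exists s : seq (int * arrow),
    (forall k, x.1 k = \sum_(p <- s) p.1 * (piA p.2).1 k) /\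
    (forall rho, x.2 rho = \sum_(p <- s) p.1 * (piA p.2).2 rho).

(* Z(Q)^vee (x) R = Hom_Z(Z(Q), R): functions additive on Z(Q),
   considered up to equality on Z(Q) *)
Definition dualR (f : lat -> R) : Prop :=
  forall x y, ZQ x -> ZQ y -> f (addL x y) = f x + f y.

Definition eqZQ (f g : lat -> R) : Prop := forall x, ZQ x -> f x = g x.

(* lattice points: elements of Z(Q)^vee = Hom_Z(Z(Q), Z) *)
Definition integral (f : lat -> R) : Prop :=
  dualR f /\ forall x, ZQ x -> exists z : int, f x = z%:~R.

Definition inC (f : lat -> R) : Prop := dualR f /\ forall a : arrow, 0 <= f (piA a).

(* faces of C: F = C cap m^perp for m in Z(Q) (x) R with m >= 0 on C;
   m = sum_i lam_i x_i with x_i in Z(Q) *)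
Definition face_of_C (F : (lat -> R) -> Prop) : Prop :=
  exists (k : nat) (lam : 'I_k -> R) (x : 'I_k -> lat),
    [/\ forall i, ZQ (x i),
        forall f, inC f -> 0 <= \sum_(i < k) lam i * f (x i) &
        forall f, F f <-> (inC f /\ \sum_(i < k) lam i * f (x i) = 0)].

Definition one_dim_face_of_C (F : (lat -> R) -> Prop) : Prop :=
  face_of_C F /\
  exists g, [/\ F g, ~ eqZQ g (fun _ => 0) &
              forall f, F f -> exists t : R, eqZQ f (fun x => t * g x)].

Definition primitive_dual (P : lat -> R) : Prop :=
  integral P /\ ~ eqZQ P (fun _ => 0) /\
  forall (c : int) (g : lat -> R), integral g -> eqZQ P (fun x => c%:~R * g x) ->
    c = 1 \/ c = -1.

Definition perfect_matching (P : lat -> R) : Prop :=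
  primitive_dual P /\ exists F, one_dim_face_of_C F /\ F P.

Definition psi (u : 'I_n -> int) : lat := (fun _ => 0, divM u).

(* extremal: psi^*(P) = v_rho, i.e. <P, psi(u)> = <u, v_rho> for all u in M
   (including that psi(u) indeed lies in Z(Q)) *)
Definition extremal_at (P : lat -> R) (rho : 'I_d) : Prop :=
  forall u : 'I_n -> int, ZQ (psi u) /\ P (psi u) = (dotM u (v rho))%:~R.

Definition perfect_matching_extremal (P : lat -> R) : Prop :=
  perfect_matching P /\ exists rho, extremal_at P rho.

Definition supp (P : lat -> R) (a : arrow) : Prop := 0 < P (piA a).

Definition Pi_rho (rho : 'I_d) : lat -> R := fun x => (x.2 rho)%:~R.

Definition x_divides (rho : 'I_d) (E : 'I_d -> int) : Prop :=
  exists E' : 'I_d -> int, effective E' /\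
    forall rho', E rho' = E' rho' + ((rho' == rho)%:R : int).

End Toric.

From HB Require Import structures.
From mathcomp Require Import all_boot all_order all_algebra.
From mathcomp Require Import reals.
From mathcomp Require Import zify ring lra.
From Stdlib Require Import FunctionalExtensionality Classical.
Set Implicit Arguments. Unset Strict Implicit. Unset Printing Implicit Defensive.
Import Order.TTheory GRing.Theory Num.Theory.
Local Open Scope ring_scope.

(* Pi_rho is the coordinate functional "exponent of x_rho"; it is nonnegative on arrows
   because labels are effective, and primitive because it takes the value 1 on psi(u1)
   for any u1 with <u1, v_rho> = 1.  For the face, take a normal ur of the facet of
   sigma^vee dual to rho and, for every pair of vertices, a section not divisible by
   x_rho.  Since the sheaves are pairwise non-isomorphic, every section factors into
   arrows, so these sections give an element m of N(Q) with Pi_rho(m) = 0.  If f lies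
   in C and f(m) = 0, then f vanishes on each of these paths; on M, f o psi is
   nonnegative on sigma^vee and vanishes at the relative interior point ur of the facet,
   hence is a multiple of <-, v_rho>; closing each arrow into a cycle with a path back
   that avoids x_rho then shows f = c Pi_rho, so C meets m^perp in the ray of Pi_rho.
   The normals ur and interior points of sigma^vee come from Gordan's alternative,
   proved by Fourier-Motzkin elimination. *)

Lemma exists_between (F : realFieldType) (A B : seq F) :
  (forall a b, a \in A -> b \in B -> a < b) ->
  exists t, (forall a, a \in A -> a < t) /\ (forall b, b \in B -> t < b).
Proof.
move=> AltB.
pose lo := \big[Order.min/0]_(b <- B) b - 1.
pose m := \big[Order.max/lo]_(a <- A) a.
pose M := \big[Order.min/m + 1]_(b <- B) b.
have m_ge a : a \in A -> a <= m by move=> aA; exact: (le_bigmax_seq _ _ _ _ aA).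
have M_le b : b \in B -> M <= b by move=> bB; exact: (ge_bigmin_seq _ _ _ _ bB).
have lt_m b : b \in B -> m < b.
  move=> bB; rewrite /m big_seq_cond; apply: bigmax_lt => [|a /andP [aA _]].
    by rewrite /lo ltrBlDr (le_lt_trans (ge_bigmin_seq _ _ _ _ bB _)) ?ltrDl.
  exact: AltB.
have mM : m < M.
  by rewrite /M big_seq_cond; apply: lt_bigmin => [|b /andP [bB _]]; [rewrite ltrDl|exact: lt_m].
exists ((m + M) / 2); split=> [a /m_ge|b /M_le] h; lra.
Qed.

Definition dotQ (n : nat) (u w : nat -> rat) : rat := \sum_(k < n) u k * w k.

Definition separates (n : nat) (I : eqType) (s : seq I) (f : I -> nat -> rat)
    (u : nat -> rat) : Prop :=
  forall i, i \in s -> 0 < dotQ n u (f i).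

Definition vanishing_combination (n : nat) (I : eqType) (s : seq I)
    (f : I -> nat -> rat) (c : seq (rat * I)) : Prop :=
  [/\ forall p, p \in c -> 0 <= p.1 /\ p.2 \in s, has (fun p => 0 < p.1) c &
      forall k, (k < n)%N -> \sum_(p <- c) p.1 * f p.2 k = 0].

Section FourierMotzkinStep.
Variables (n : nat) (I : eqType) (s : seq I) (f : I -> nat -> rat).

Definition fm_rows : seq (I + I * I) :=
  map inl [seq i <- s | f i n == 0] ++
  [seq inr (p, q) | p <- [seq i <- s | 0 < f i n], q <- [seq i <- s | f i n < 0]].

(* Pairing a positive with a negative row cancels the [n]-th coordinate. *)
Definition fm_row (x : I + I * I) : nat -> rat :=
  match x with
  | inl i => f i
  | inr (p, q) => fun k => - f q n * f p k + f p n * f q k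
  end.

Lemma mem_fm_rows x : x \in fm_rows ->
  match x with
  | inl i => i \in s /\ f i n = 0
  | inr (p, q) => [/\ p \in s, q \in s, 0 < f p n & f q n < 0]
  end.
Proof.
case: x => [i|[p q]]; rewrite mem_cat => /orP [].
- by case/mapP => j /[!mem_filter] /andP [/eqP ? ?] [->].
- by case/allpairsP => [[? ?]] [].
- by case/mapP.
- by case/allpairsP => [[? ?]] /= [] /[!mem_filter] /andP [? ?] /andP [? ?] [-> ->].
Qed.

Lemma fm_row_last x : x \in fm_rows -> fm_row x n = 0.
Proof. by case: x => [i /mem_fm_rows []|[p q] _] //=; ring. Qed.

Definition fm_unfold (x : rat * (I + I * I)) : seq (rat * I) :=
  match x.2 with
  | inl i => [:: (x.1, i)]
  | inr (p, q) => [:: (x.1 * - f q n, p); (x.1 * f p n, q)]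
  end.

Lemma fm_lift_combination c :
  vanishing_combination n fm_rows fm_row c ->
  vanishing_combination n.+1 s f (flatten [seq fm_unfold x | x <- c]).
Proof.
case=> c_ge0 c_pos c_eq0; split.
- move=> p /flatten_mapP [[l x] /c_ge0 [/= l_ge0 /mem_fm_rows]].
  case: x => [i [i_s _]|[p' q'] [p's q's p'_gt0 q'_lt0]]; rewrite /fm_unfold /=.
    by rewrite inE => /eqP ->.
  by rewrite !inE => /orP [] /eqP -> /=; split => //; apply: mulr_ge0; lra.
- case/hasP: c_pos => [[l x] xc /= l_gt0]; apply/hasP.
  have [_ /mem_fm_rows] := c_ge0 _ xc.
  case: x xc => [i|[p q]] xc hx.
    by exists (l, i) => //; apply/flatten_mapP; exists (l, inl i); rewrite ?mem_head.
  exists (l * - f q n, p); last by case: hx => _ _ _ q_lt0 /=; apply: mulr_gt0; lra.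
  by apply/flatten_mapP; exists (l, inr (p, q)); rewrite ?mem_head.
- have unfold_sum k : \sum_(p <- flatten [seq fm_unfold x | x <- c]) p.1 * f p.2 k =
      \sum_(x <- c) x.1 * fm_row x.2 k.
    rewrite big_flatten big_map; apply: eq_bigr => [[l [i|[p q]]]] _.
      by rewrite big_seq1.
    by rewrite big_cons big_seq1 /=; ring.
  move=> k; rewrite unfold_sum ltnS leq_eqVlt => /orP [/eqP ->|/c_eq0 //].
  by rewrite big_seq big1 // => x /c_ge0 [_ /fm_row_last ->]; rewrite mulr0.
Qed.

(* A last coordinate [t] extends [u] iff [r p < t < r q] for the rows [p] with positive
   and [q] with negative last entry; the pair rows make these bounds compatible. *)
Lemma fm_lift_separation u : separates n fm_rows fm_row u ->
  exists u', separates n.+1 s f u'.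
Proof.
move=> u_sep; pose a i := dotQ n u (f i); pose r i := - a i / f i n.
pose P := [seq i <- s | 0 < f i n]; pose N := [seq i <- s | f i n < 0].
have r_mul i : f i n != 0 -> r i * f i n = - a i by move=> ?; rewrite divfK.
have rPN : forall x y, x \in map r P -> y \in map r N -> x < y.
  move=> _ _ /mapP [p + ->] /mapP [q + ->].
  rewrite !mem_filter => /andP [p_gt0 ps] /andP [q_lt0 qs].
  have pq : inr (p, q) \in fm_rows.
    by rewrite mem_cat allpairs_f ?orbT // mem_filter ?p_gt0 ?q_lt0.
  have : dotQ n u (fm_row (inr (p, q))) = - f q n * a p + f p n * a q.
    by rewrite /a /dotQ !mulr_sumr -big_split; apply: eq_bigr => k _ /=; ring.
  move: (u_sep _ pq) => /[swap] ->.
  rewrite -[a p]opprK -[a q]opprK -r_mul ?lt0r_neq0 // -r_mul ?ltr0_neq0 //.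
  rewrite (_ : _ + _ = (f p n * - f q n) * (r q - r p)); last by ring.
  by rewrite pmulr_rgt0 ?subr_gt0 // mulr_gt0 // oppr_gt0.
have [t [tP tN]] := exists_between rPN.
exists (fun k => if (k < n)%N then u k else t) => i i_s.
rewrite /dotQ big_ord_recr /= ltnn (eq_bigr (fun k : 'I_n => u k * f i k)) => [|k _];
  last by rewrite /= ltn_ord.
rewrite -/(dotQ _ _ _) -/(a i).
have [i_lt0|i_gt0|i_eq0] := ltgtP (f i n) 0.
- have iN : i \in N by rewrite mem_filter i_lt0 i_s.
  have := tN _ (map_f r iN); have := r_mul i (ltr0_neq0 i_lt0); nra.
- have iP : i \in P by rewrite mem_filter i_gt0 i_s.
  have := tP _ (map_f r iP); have := r_mul i (lt0r_neq0 i_gt0); nra.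
- have i_rows : inl i \in fm_rows by rewrite mem_cat map_f // mem_filter i_eq0 eqxx i_s.
  by have := u_sep _ i_rows; rewrite /= i_eq0 mulr0 addr0.
Qed.

End FourierMotzkinStep.

Lemma gordan_alternative n (I : eqType) (s : seq I) (f : I -> nat -> rat) :
  (exists u, separates n s f u) \/ (exists c, vanishing_combination n s f c).
Proof.
elim: n I s f => [|n IH] I s f.
  case: s => [|i s]; [by left; exists (fun _ => 0)|right; exists [:: (1, i)]].
  by split => // p; rewrite mem_seq1 => /eqP -> /=; rewrite mem_head ler01.
have [[u /fm_lift_separation]|[c /fm_lift_combination comb]] := IH _ (fm_rows n s f) (fm_row n f).
  by left.
by right; exists (flatten [seq fm_unfold n f x | x <- c]).
Qed.

Definition zero_ext (n : nat) (w : 'I_n -> int) : nat -> rat :=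
  fun k => if insub k is Some k' then (w k')%:~R else 0.

Lemma dotQ_zero_ext n (u : nat -> rat) (w : 'I_n -> int) :
  dotQ n u (zero_ext w) = \sum_(k < n) u k * (w k)%:~R.
Proof. by apply: eq_bigr => k _; rewrite /zero_ext valK. Qed.

Lemma clear_denominators n (u : nat -> rat) : exists (U : 'I_n -> int) (D : rat),
  0 < D /\ forall k : 'I_n, (U k)%:~R = D * u k.
Proof.
exists (fun k : 'I_n => numq (u k) * \prod_(j < n | j != k) denq (u j)),
  (\prod_(j < n) (denq (u j))%:~R).
split=> [|k]; first by apply: prodr_gt0 => j _; rewrite ltr0z denq_gt0.
by rewrite intrM numqE rmorph_prod /= [in RHS](bigD1 k) //=; ring.
Qed.

Lemma sum_by_index (d : nat) (c : seq (rat * 'I_d)) (G : 'I_d -> rat) :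
  \sum_i (\sum_(p <- c | p.2 == i) p.1) * G i = \sum_(p <- c) p.1 * G p.2.
Proof.
under eq_bigr do rewrite big_distrl big_mkcond /=.
rewrite exchange_big /=; apply: eq_bigr => p _.
by rewrite -big_mkcond /=; apply: (big_pred1 p.2) => i /=; rewrite eq_sym.
Qed.

Lemma exists_int_positive_dual n d (w : 'I_d -> 'I_n -> int) :
  (forall lam : 'I_d -> rat, (forall i, 0 <= lam i) ->
     (forall k, \sum_i lam i * (w i k)%:~R = 0) -> forall i, lam i = 0) ->
  exists u : 'I_n -> int, forall i, 0 < dotM u (w i).
Proof.
move=> pointed.
case: (gordan_alternative n (enum 'I_d) (fun i => zero_ext (w i))) => [[u u_sep]|].
  have [U [D [D_gt0 UD]]] := clear_denominators n u.
  exists U => i; have := u_sep i (mem_enum _ _); rewrite dotQ_zero_ext => h.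
  rewrite -(ltr0z rat) /dotM rmorph_sum /=.
  under eq_bigr do rewrite intrM UD -mulrA.
  by rewrite -mulr_sumr mulr_gt0.
case=> c [c_ge0 /hasP [p pc p_gt0] c_eq0].
pose lam i := \sum_(q <- c | q.2 == i) q.1.
have /eqP[] : lam p.2 != 0.
  rewrite /lam big_seq_cond psumr_neq0 => [|q /andP [/c_ge0 []] //].
  by apply/hasP; exists p; rewrite ?pc ?eqxx.
apply: pointed => [i|k].
  by rewrite /lam big_seq_cond sumr_ge0 // => q /andP [/c_ge0 []].
rewrite sum_by_index -[RHS](c_eq0 k (ltn_ord k)).
by apply: eq_bigr => q _; rewrite /zero_ext valK.
Qed.

Lemma sum_indicator (T : finType) (S : nzRingType) (j : T) (c : S) (F : T -> S) :
  \sum_i (if i == j then c else 0) * F i = c * F j.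
Proof. by rewrite (bigD1 j) //= eqxx big1 ?addr0 // => i /negbTE ->; rewrite mul0r. Qed.

Lemma sum_except (T : finType) (S : nzRingType) (j : T) (lam F : T -> S) :
  \sum_i (if i == j then 0 else lam i) * F i = \sum_i lam i * F i - lam j * F j.
Proof.
rewrite [in RHS](bigD1 j) //= (bigD1 j) //= eqxx mul0r add0r addrAC subrr add0r.
by apply: eq_bigr => i /negbTE ->.
Qed.

Lemma sum_flip_one (T : finType) (S : comNzRingType) (j : T) (mu a : T -> S) :
  \sum_i mu i * (if i == j then - a i else a i) = \sum_i mu i * a i - 2 * mu j * a j.
Proof.
rewrite [in RHS](bigD1 j) //= (bigD1 j) //= eqxx.
by rewrite (eq_bigr (fun i => mu i * a i)) => [|i /negbTE ->]; first ring.
Qed.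

Lemma dotM_lin n (a b : int) (x y w : 'I_n -> int) :
  dotM (fun k => a * x k + b * y k) w = a * dotM x w + b * dotM y w.
Proof. by rewrite /dotM !mulr_sumr -big_split; apply: eq_bigr => k _ /=; ring. Qed.

Lemma dotMN n (x w : 'I_n -> int) : dotM x (fun k => - w k) = - dotM x w.
Proof. by rewrite /dotM -sumrN; apply: eq_bigr => k _; ring. Qed.

Lemma bezout_family n (w : 'I_n -> int) (s : seq 'I_n) : uniq s ->
  exists u : 'I_n -> int,
    \sum_(k <- s) u k * w k = (\big[gcdn/0%N]_(k <- s) `|w k|%N)%:Z /\
    forall j, j \in s -> (\big[gcdn/0%N]_(k <- s) `|w k| %| `|w j|)%N.
Proof.
elim: s => [|k s IH] /=; first by exists (fun _ => 0); rewrite !big_nil.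
case/andP => k_s /IH [u [u_gcd gcd_dvd]].
have [a [b ab]] := Bezoutz (w k) (\big[gcdn/0%N]_(k <- s) `|w k|%N)%:Z.
exists (fun j => if j == k then a else b * u j); split.
  rewrite !big_cons eqxx.
  have -> : \sum_(j <- s) (if j == k then a else b * u j) * w j = b * \sum_(j <- s) u j * w j.
    rewrite mulr_sumr !big_seq; apply: eq_bigr => j j_s.
    by rewrite ifN ?mulrA //; apply: contraNneq k_s => <-.
  by rewrite u_gcd ab /gcdz absz_nat.
move=> j; rewrite inE big_cons => /orP [/eqP ->|j_s]; first exact: dvdn_gcdl.
exact: dvdn_trans (dvdn_gcdr _ _) (gcd_dvd j j_s).
Qed.

Section ToricCone.
Variables (R : realType) (n d : nat) (v : 'I_d -> 'I_n -> int).
Hypothesis toric : toric_cone_data R v.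

Lemma toric_pointed (lam : 'I_d -> R) : (forall i, 0 <= lam i) ->
  (forall k, \sum_i lam i * (v i k)%:~R = 0) -> forall i, lam i = 0.
Proof.
case: toric => [prim [_ [convex _]]] lam_ge0 lam_eq0 j.
apply/eqP/negP => /negP lam_j.
pose x k := lam j * (v j k)%:~R.
have sig_x : in_sigma v x.
  exists (fun i => if i == j then lam j else 0).
  by split=> [i|k]; [case: eqP|rewrite sum_indicator].
have sig_Nx : in_sigma v (fun k => - x k).
  exists (fun i => if i == j then 0 else lam i); split=> [i|k]; first by case: eqP.
  by rewrite sum_except lam_eq0 sub0r.
have v_j0 k : v j k = 2 * 0.
  have /eqP := convex _ sig_x sig_Nx k.
  by rewrite mulf_eq0 (negbTE lam_j) intr_eq0 mulr0 => /eqP.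
by case: (prim j 2 (fun _ => 0) v_j0).
Qed.

Lemma toric_pointed_rat (lam : 'I_d -> rat) : (forall i, 0 <= lam i) ->
  (forall k, \sum_i lam i * (v i k)%:~R = 0) -> forall i, lam i = 0.
Proof.
move=> lam_ge0 lam_eq0 i; apply/eqP; rewrite -(fmorph_eq0 (@ratr R)); apply/eqP.
apply: (@toric_pointed (fun i => ratr (lam i))) => [j|k]; first by rewrite ler0q.
rewrite -[RHS](rmorph0 (@ratr R)) -(lam_eq0 k) rmorph_sum.
by apply: eq_bigr => j _; rewrite rmorphM /= ratr_int.
Qed.

Lemma exists_interior_dual : exists u0 : 'I_n -> int, forall rho, 0 < dotM u0 (v rho).
Proof. exact/exists_int_positive_dual/toric_pointed_rat. Qed.

(* The rays other than [rho], together with [- v rho], still span a pointed cone: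
   otherwise [v rho] would lie in the cone spanned by the other rays. *)
Lemma exists_facet_normal (rho : 'I_d) : exists u : 'I_n -> int,
  dotM u (v rho) = 0 /\ forall rho', rho' != rho -> 0 < dotM u (v rho').
Proof.
have [_ [ray _]] := toric.
have [u0 u0_gt0] := exists_interior_dual.
pose w i := if i == rho then (fun k => - v rho k) else v i.
have [u1 u1_gt0] : exists u : 'I_n -> int, forall i, 0 < dotM u (w i).
  apply: exists_int_positive_dual => lam lam_ge0 lam_eq0.
  pose mu i : R := ratr (lam i).
  have mu_ge0 i : 0 <= mu i by rewrite ler0q.
  have mu_eq k : \sum_i mu i * (v i k)%:~R = 2 * mu rho * (v rho k)%:~R.
    apply/eqP; rewrite -subr_eq0 -sum_flip_one; apply/eqP.
    rewrite -[RHS](rmorph0 (@ratr R)) -(lam_eq0 k) rmorph_sum.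
    apply: eq_bigr => j _; rewrite rmorphM /= ratr_int /w.
    by case: eqP => [->|_]; rewrite ?intrN.
  have [mu_rho0|mu_rho_neq0] := eqVneq (mu rho) 0.
    move=> i; apply/eqP; rewrite -(fmorph_eq0 (@ratr R)); apply/eqP.
    by apply: (toric_pointed mu_ge0) => k; rewrite mu_eq mu_rho0 mulr0 mul0r.
  case: (ray rho); exists (fun i => if i == rho then 0 else mu i / mu rho).
  split=> [i|]; first by case: eqP => // _; rewrite divr_ge0.
  split=> [|k]; first by case: eqP.
  rewrite sum_except; under eq_bigr do rewrite mulrAC.
  by rewrite -mulr_suml mu_eq; field.
have v_u0 := u0_gt0 rho.
have v_u1 : 0 < - dotM u1 (v rho) by have := u1_gt0 rho; rewrite /w eqxx dotMN.
exists (fun k => dotM u0 (v rho) * u1 k + (- dotM u1 (v rho)) * u0 k); split.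
  by rewrite dotM_lin; ring.
move=> rho' rho'_neq; rewrite dotM_lin addr_gt0 ?mulr_gt0 //.
by have := u1_gt0 rho'; rewrite /w (negbTE rho'_neq).
Qed.

Lemma exists_dual_unit (rho : 'I_d) : exists u : 'I_n -> int, dotM u (v rho) = 1.
Proof.
have [prim _] := toric.
have [u [u_gcd gcd_dvd]] := bezout_family (v rho) (index_enum_uniq 'I_n).
set g := \big[gcdn/0%N]_(k <- _) _ in u_gcd gcd_dvd.
case: (prim rho g%:Z (fun k => (v rho k %/ g%:Z)%Z)) => [k|g1|gN1].
- by rewrite mulrC divzK // dvdzE absz_nat gcd_dvd ?mem_index_enum.
- by exists u; rewrite /dotM u_gcd g1.
- by have : (0 <= g%:Z) by []; rewrite gN1.
Qed.

End ToricCone.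

Lemma additive_int (S : pzRingType) (g : int -> S) :
  (forall x y, g (x + y) = g x + g y) -> forall z, g z = z%:~R * g 1.
Proof.
move=> gD; have g0 : g 0 = 0 by apply: (@addrI _ (g 0)); rewrite -gD !addr0.
elim/int_rect => [|m IH|m IH]; first by rewrite g0 mul0r.
  by rewrite -addn1 PoszD gD IH intrD mulrDl mul1r.
have gN1 : g (-1) = - g 1 by apply/eqP; rewrite -addr_eq0 -gD addNr g0.
by rewrite -addn1 PoszD opprD gD IH gN1 intrD intrN mulrDl mulN1r.
Qed.

Lemma exists_dominating_multiple (T : finType) (P : pred T) (a t : T -> int) :
  (forall i, P i -> 0 < a i) ->
  exists N : int, 0 <= N /\ forall i, P i -> 0 <= N * a i + t i /\ 0 <= N * a i - t i.
Proof.
move=> a_gt0; exists (\sum_i `|t i|); split=> [|i Pi]; first exact: sumr_ge0.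
have t_le : `|t i| <= \sum_i `|t i| by rewrite (bigD1 i) //= lerDl sumr_ge0.
have := a_gt0 i Pi; have := ler_norml (t i) `|t i|; rewrite lexx => /esym/andP [].
by nia.
Qed.

Section Quiver.
Variables (R : realType) (n d : nat) (v : 'I_d -> 'I_n -> int).
Variables (r : nat) (D' : 'I_r.+1 -> 'I_d -> int).
Hypothesis toric : toric_cone_data R v.
Hypothesis distinct :
  forall i j : 'I_r.+1, i != j -> ~ principal v (fun rho => D' i rho - D' j rho).

Notation arr := (arrow v D').

Lemma lat_eq (x y : lat d r) :
  (forall k, x.1 k = y.1 k) -> (forall rho, x.2 rho = y.2 rho) -> x = y.
Proof.
by case: x y => [x1 x2] [y1 y2] /= e1 e2; congr pair; apply: functional_extensionality.
Qed.

(* [vecZ s] and [vecA s] are the images under [pi] of [\sum z chi_a] and of [\sum chi_a]. *)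
Definition vecZ (s : seq (int * arr)) : lat d r :=
  (fun k => \sum_(p <- s) p.1 * (piA p.2).1 k, fun rho => \sum_(p <- s) p.1 * lab p.2 rho).

Definition vecA (s : seq arr) : lat d r :=
  (fun k => \sum_(a <- s) (piA a).1 k, fun rho => \sum_(a <- s) lab a rho).

Definition pathv (i j : 'I_r.+1) (E : 'I_d -> int) : lat d r :=
  (fun k => ((k == j)%:R - (k == i)%:R : int), E).

Lemma vecA_vecZ s : vecA s = vecZ [seq (1, a) | a <- s].
Proof. by apply: lat_eq => [k|rho] /=; rewrite big_map; apply: eq_bigr => a _; rewrite mul1r. Qed.

Lemma vecZ_cat s1 s2 : vecZ (s1 ++ s2) = addL (vecZ s1) (vecZ s2).
Proof. by apply: lat_eq => [k|rho] /=; rewrite big_cat. Qed.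

Lemma vecA_cat s1 s2 : vecA (s1 ++ s2) = addL (vecA s1) (vecA s2).
Proof. by apply: lat_eq => [k|rho] /=; rewrite big_cat. Qed.

Lemma vecA_seq1 (a : arr) : vecA [:: a] = piA a.
Proof. by apply: lat_eq => [k|rho]; rewrite /= big_seq1. Qed.

Lemma ZQ_vecZ s : ZQ v D' (vecZ s).
Proof. by exists s. Qed.

Lemma ZQ_vecA s : ZQ v D' (vecA s).
Proof. by rewrite vecA_vecZ; apply: ZQ_vecZ. Qed.

Lemma ZQ_piA (a : arr) : ZQ v D' (piA a).
Proof. by rewrite -vecA_seq1; apply: ZQ_vecA. Qed.

Lemma ZQ_vecZP x : ZQ v D' x -> exists s, x = vecZ s.
Proof. by case=> s [e1 e2]; exists s; apply: lat_eq. Qed.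

Lemma dualR_vecZ (f : lat d r -> R) : dualR v D' f ->
  forall s, f (vecZ s) = \sum_(p <- s) p.1%:~R * f (piA p.2).
Proof.
move=> fD; have fDZ s1 s2 : f (addL (vecZ s1) (vecZ s2)) = f (vecZ s1) + f (vecZ s2).
  exact: fD (ZQ_vecZ s1) (ZQ_vecZ s2).
have vecZ0 : f (vecZ [::]) = 0.
  apply: (@addrI _ (f (vecZ [::]))); rewrite addr0 -fDZ.
  by congr f; apply: lat_eq => [k|rho]; rewrite /= !big_nil addr0.
have vecZ1 a z : f (vecZ [:: (z, a)]) = z%:~R * f (piA a).
  rewrite (@additive_int _ (fun z => f (vecZ [:: (z, a)]))) => [|x y].
    by rewrite -vecA_seq1 vecA_vecZ.
  rewrite -fDZ; congr f.
  by apply: lat_eq => [k|rho]; rewrite /= !big_seq1 mulrDl.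
elim=> [|[z a] s IH]; first by rewrite vecZ0 big_nil.
by rewrite -cat1s vecZ_cat fDZ IH vecZ1 big_cons.
Qed.

Lemma dualR_vecA (f : lat d r -> R) s : dualR v D' f -> f (vecA s) = \sum_(a <- s) f (piA a).
Proof. by move=> fD; rewrite vecA_vecZ dualR_vecZ // big_map; under eq_bigr do rewrite mul1r. Qed.

Lemma inC_vecA_ge0 (f : lat d r -> R) s : inC v D' f -> 0 <= f (vecA s).
Proof. by case=> fD f_ge0; rewrite dualR_vecA // sumr_ge0. Qed.

Lemma inC_vecA_cat_eq0 (f : lat d r -> R) s1 s2 : inC v D' f ->
  f (vecA (s1 ++ s2)) = 0 -> f (vecA s1) = 0 /\ f (vecA s2) = 0.
Proof.
move=> fC; have [fD _] := fC; rewrite vecA_cat (fD _ _ (ZQ_vecA _) (ZQ_vecA _)).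
by have := inC_vecA_ge0 s1 fC; have := inC_vecA_ge0 s2 fC; lra.
Qed.

Lemma inC_vecA_flatten_eq0 (f : lat d r -> R) (I : eqType) (t : seq I) (P : I -> seq arr) :
  inC v D' f -> f (vecA (flatten (map P t))) = 0 -> forall i, i \in t -> f (vecA (P i)) = 0.
Proof.
move=> fC; elim: t => [//|j t IH] /= /(inC_vecA_cat_eq0 fC) [Pj0 /IH t0] i.
by rewrite inE => /orP [/eqP ->|/t0].
Qed.

Lemma effective_sum_gt0 (E : 'I_d -> int) :
  effective E -> nonzero_div E -> 0 < \sum_rho E rho.
Proof.
move=> E_ge0 [rho /negPf E_rho]; rewrite (bigD1 rho) //= ltr_pwDl ?sumr_ge0 //.
by rewrite lt_def E_rho E_ge0.
Qed.

(* Induction on the degree; in degree 0 the sheaves [E_i] and [E_j] are isomorphic,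
   so [i = j] by [distinct]. *)
Lemma path_of_sect i j E : sect v D' i j E -> exists s, vecA s = pathv i j E.
Proof.
have [K] := ubnP (absz (\sum_rho E rho)); elim: K i j E => // K IH i j E deg_lt sE.
have [E0|/forallPn [rho E_rho]] := boolP [forall rho, E rho == 0].
  have ij : i = j.
    apply/eqP/negPn/negP => /distinct[]; case: sE => _ [u Eu].
    by exists u => rho; rewrite -Eu (eqP (forallP E0 rho)) sub0r opprB.
  by exists [::]; apply: lat_eq => [k|rho]; rewrite /= big_nil ?ij ?subrr // (eqP (forallP E0 rho)).
have [irr|not_irr] := classic (irreducible v D' i j E).
  by exists [:: Arrow irr]; rewrite vecA_seq1.
have [k [E1 [E2 [sE1 sE2 E1_nz E2_nz E12]]]] : exists (k : 'I_r.+1) (E1 E2 : 'I_d -> int),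
    [/\ sect v D' i k E1, sect v D' k j E2, nonzero_div E1, nonzero_div E2 &
        forall rho, E rho = E1 rho + E2 rho].
  by apply: NNPP => no_split; apply: not_irr; split=> //; split=> //; exists rho.
have deg12 : \sum_rho E rho = \sum_rho E1 rho + \sum_rho E2 rho.
  by rewrite -big_split; apply: eq_bigr => rho' _; exact: E12.
have deg1 := effective_sum_gt0 (proj1 sE1) E1_nz.
have deg2 := effective_sum_gt0 (proj1 sE2) E2_nz.
have [s1 e1] : exists s, vecA s = pathv i k E1 by apply: IH sE1; lia.
have [s2 e2] : exists s, vecA s = pathv k j E2 by apply: IH sE2; lia.
exists (s1 ++ s2); rewrite vecA_cat e1 e2.
by apply: lat_eq => [x|rho'] /=; rewrite ?E12 //; ring.
Qed.

Lemma psi_path (u : 'I_n -> int) : (forall rho, 0 <= dotM u (v rho)) ->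
  exists s, vecA s = psi v r u.
Proof.
move=> u_ge0; have [|s e] := @path_of_sect ord0 ord0 (divM v u).
  by split=> //; exists u => rho; rewrite subrr subr0.
by exists s; rewrite e; apply: lat_eq => [k|rho] //=; rewrite subrr.
Qed.

Lemma psi_add (x y : 'I_n -> int) :
  psi v r (fun k => x k + y k) = addL (psi v r x) (psi v r y).
Proof.
apply: lat_eq => [k|rho] /=; first by rewrite addr0.
by rewrite /divM /dotM -big_split; apply: eq_bigr => k _ /=; rewrite mulrDl.
Qed.

(* Every [u] is a difference of two elements of [sigma^vee], namely [N u0 + u] and [N u0]. *)
Lemma ZQ_psi (u : 'I_n -> int) : ZQ v D' (psi v r u).
Proof.
have [u0 u0_gt0] := exists_interior_dual toric.
have [N [N_ge0 Nu0]] := exists_dominating_multiple (P := xpredT)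
  (fun rho => dotM u (v rho)) (fun rho _ => u0_gt0 rho).
have [s1 e1] : exists s, vecA s = psi v r (fun k => N * u0 k + 1 * u k).
  by apply: psi_path => rho; rewrite dotM_lin mul1r; case: (Nu0 rho isT).
have [s2 e2] : exists s, vecA s = psi v r (fun k => N * u0 k + 0 * u k).
  by apply: psi_path => rho; rewrite dotM_lin mul0r addr0 mulr_ge0 // ltW.
exists ([seq (1, a) | a <- s1] ++ [seq (-1, a) | a <- s2]).
split=> [k|rho]; rewrite big_cat /= !big_map; under eq_bigr do rewrite mul1r;
  under [X in _ + X]eq_bigr do rewrite mulN1r; rewrite sumrN.
  have := congr1 (fun x => x.1 k) e1; have := congr1 (fun x => x.1 k) e2.
  by rewrite /= => -> ->; rewrite subrr.
have := congr1 (fun x => x.2 rho) e1; have := congr1 (fun x => x.2 rho) e2.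
by rewrite /= /divM !dotM_lin => -> ->; ring.
Qed.

Lemma dualR_psi_lin (f : lat d r -> R) : dualR v D' f ->
  forall (a b : int) (x y : 'I_n -> int),
  f (psi v r (fun k => a * x k + b * y k)) = a%:~R * f (psi v r x) + b%:~R * f (psi v r y).
Proof.
move=> fD; have fpsiD x y : f (psi v r (fun k => x k + y k)) = f (psi v r x) + f (psi v r y).
  by rewrite psi_add (fD _ _ (ZQ_psi x) (ZQ_psi y)).
have fpsiZ x a : f (psi v r (fun k => a * x k)) = a%:~R * f (psi v r x).
  rewrite (@additive_int _ (fun a => f (psi v r (fun k => a * x k)))) => [|a1 a2].
    by congr (_ * f (psi v r _)); apply: functional_extensionality => k; rewrite mul1r.
  by rewrite -fpsiD; congr (f (psi v r _)); apply: functional_extensionality => k; rewrite mulrDl.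
by move=> a b x y; rewrite fpsiD !fpsiZ.
Qed.

Lemma exists_sect_avoiding (rho : 'I_d) (i j : 'I_r.+1) :
  exists E, sect v D' i j E /\ E rho = 0.
Proof.
have [ur [ur_rho ur_gt0]] := exists_facet_normal toric rho.
have [u1 u1_rho] := exists_dual_unit toric rho.
pose c := D' i rho - D' j rho.
have [N [_ Nur]] := exists_dominating_multiple
  (fun rho' => D' j rho' - D' i rho' + c * dotM u1 (v rho')) ur_gt0.
pose u k := c * u1 k + N * ur k.
exists (fun rho' => D' j rho' - D' i rho' + divM v u rho'); split; last first.
  by rewrite /divM /u dotM_lin u1_rho ur_rho /c; ring.
split=> [rho'|]; last by exists u => rho'; ring.
rewrite /divM /u dotM_lin; have [->|rho'_neq] := eqVneq rho' rho.
  by rewrite u1_rho ur_rho /c; lia.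
by have [+ _] := Nur rho' rho'_neq; lia.
Qed.

Section Facet.
Variables (rho : 'I_d) (ur u1 : 'I_n -> int).
Hypothesis ur_rho : dotM ur (v rho) = 0.
Hypothesis ur_gt0 : forall rho', rho' != rho -> 0 < dotM ur (v rho').
Hypothesis u1_rho : dotM u1 (v rho) = 1.

(* [ur] lies in the relative interior of the facet [v rho^perp] of [sigma^vee], so a
   functional nonnegative on [sigma^vee] and vanishing at [ur] vanishes on that facet. *)
Lemma inC_psi_facet (f : lat d r -> R) : inC v D' f -> f (psi v r ur) = 0 ->
  forall u, f (psi v r u) = (dotM u (v rho))%:~R * f (psi v r u1).
Proof.
move=> fC f_ur; have [fD _] := fC; have flin := dualR_psi_lin fD.
have f_ge0 u : (forall rho', 0 <= dotM u (v rho')) -> 0 <= f (psi v r u).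
  by move=> /psi_path [s <-]; exact: inC_vecA_ge0.
have f_perp w : dotM w (v rho) = 0 -> f (psi v r w) = 0.
  move=> w_rho; have [N [_ Nur]] := exists_dominating_multiple (fun rho' => dotM w (v rho')) ur_gt0.
  have pos (b : int) : b = 1 \/ b = -1 -> 0 <= f (psi v r (fun k => N * ur k + b * w k)).
    move=> b_pm; apply: f_ge0 => rho'; rewrite dotM_lin.
    have [->|/Nur] := eqVneq rho' rho; first by rewrite ur_rho w_rho !mulr0 addr0.
    by case: b_pm => -> [? ?]; rewrite ?mul1r ?mulN1r.
  have := pos 1 (or_introl erefl); have := pos (-1) (or_intror erefl).
  by rewrite !flin f_ur mulr0 !add0r intrN mulN1r mul1r; lra.
move=> u; have := f_perp (fun k => 1 * u k + (- dotM u (v rho)) * u1 k).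
rewrite dotM_lin u1_rho mul1r mulr1 subrr flin mul1r intrN mulNr => /(_ erefl) /eqP.
by rewrite subr_eq0 => /eqP.
Qed.

(* Closing an arrow [a] into a cycle with a path avoiding [x_rho] reduces [f] on [a]
   to its value on [M]. *)
Lemma dualR_arrow_value (f : lat d r -> R) (c : R) : dualR v D' f ->
  (forall u, f (psi v r u) = (dotM u (v rho))%:~R * c) ->
  forall (a : arr) s E, vecA s = pathv (hd a) (tl a) E -> sect v D' (hd a) (tl a) E ->
  E rho = 0 -> f (vecA s) = 0 -> f (piA a) = (lab a rho)%:~R * c.
Proof.
move=> fD f_psi a s E e [_ [u2 E_u2]] E_rho fs0.
have [[_ [u3 lab_u3]] _] := arrow_irr a.
have cycle : addL (piA a) (vecA s) = psi v r (fun k => 1 * u3 k + 1 * u2 k).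
  rewrite e; apply: lat_eq => [k|rho'] /=; first by ring.
  by rewrite /divM dotM_lin -!/(divM v _ rho') -E_u2 -lab_u3; ring.
have := fD _ _ (ZQ_piA a) (ZQ_vecA s); rewrite cycle fs0 addr0 => <-.
rewrite f_psi dotM_lin -!/(divM v _ rho) -E_u2 -lab_u3 E_rho; congr (_%:~R * _); ring.
Qed.

End Facet.

Lemma dualR_eq_Pi_rho (f : lat d r -> R) (rho : 'I_d) (c : R) : dualR v D' f ->
  (forall a : arr, f (piA a) = (lab a rho)%:~R * c) ->
  eqZQ v D' f (fun x => c * Pi_rho R rho x).
Proof.
move=> fD f_arr x /ZQ_vecZP [s ->]; rewrite dualR_vecZ // /Pi_rho /= rmorph_sum mulr_sumr.
by apply: eq_bigr => p _; rewrite f_arr /= intrM; ring.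
Qed.

Lemma Pi_rho_dualR rho : dualR v D' (Pi_rho R rho).
Proof. by move=> x y _ _; rewrite /Pi_rho /= intrD. Qed.

Lemma Pi_rho_inC rho : inC v D' (Pi_rho R rho).
Proof.
split=> [|a]; first exact: Pi_rho_dualR.
by rewrite /Pi_rho /= ler0z; case: (arrow_irr a) => [[+ _] _]; apply.
Qed.

Lemma Pi_rho_primitive rho : primitive_dual v D' (Pi_rho R rho).
Proof.
have [u1 u1_rho] := exists_dual_unit toric rho.
have Pi_u1 : Pi_rho R rho (psi v r u1) = 1 by rewrite /Pi_rho /= /divM u1_rho.
split; [split=> [|x _]; [exact: Pi_rho_dualR|by exists (x.2 rho)]|split].
  by move=> /(_ _ (ZQ_psi u1)); rewrite Pi_u1 => /eqP; rewrite oner_eq0.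
move=> c g [_ g_int] /(_ _ (ZQ_psi u1)); rewrite Pi_u1.
have [z ->] := g_int _ (ZQ_psi u1); rewrite -intrM => cz.
have : (c * z)%:~R == 1%:~R :> R by rewrite -cz.
rewrite eqr_int => /eqP /(congr1 absz) /eqP; rewrite abszM muln_eq1 => /andP [/eqP].
by lia.
Qed.

Lemma face_of_C_vecA (S : seq arr) :
  face_of_C v D' (fun f : lat d r -> R => inC v D' f /\ f (vecA S) = 0).
Proof.
exists 1%N, (fun _ => 1), (fun _ => vecA S); split=> [_|f fC|f]; rewrite ?big_ord1 ?mul1r //.
  exact: ZQ_vecA.
exact: inC_vecA_ge0.
Qed.

Lemma exists_Pi_rho_face rho : exists S : seq arr, Pi_rho R rho (vecA S) = 0 /\
  forall f, inC v D' f -> f (vecA S) = 0 -> exists c, eqZQ v D' f (fun x => c * Pi_rho R rho x).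
Proof.
have [ur [ur_rho ur_gt0]] := exists_facet_normal toric rho.
have [u1 u1_rho] := exists_dual_unit toric rho.
have [sr e_sr] : exists s, vecA s = psi v r ur.
  apply: psi_path => rho'; have [->|/ur_gt0/ltW //] := eqVneq rho' rho; by rewrite ur_rho.
have path_ex (ij : 'I_r.+1 * 'I_r.+1) : exists s : seq arr,
    exists E, [/\ vecA s = pathv ij.1 ij.2 E, sect v D' ij.1 ij.2 E & E rho = 0].
  have [E [sE E_rho]] := exists_sect_avoiding rho ij.1 ij.2.
  by have [s e] := path_of_sect sE; exists s, E.
have [path path_spec] := fin_all_exists path_ex.
exists (sr ++ flatten (map path (enum {: 'I_r.+1 * 'I_r.+1}))); split.
  rewrite /Pi_rho /= big_cat big_flatten /= big_map.
  have -> : \sum_(a <- sr) lab a rho = 0.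
    by have := congr1 (fun x => x.2 rho) e_sr; rewrite /= /divM ur_rho.
  rewrite add0r big1 // => ij _.
  by have [E [+ _ E_rho]] := path_spec ij => /(congr1 (fun x => x.2 rho)) /= ->.
move=> f fC /(inC_vecA_cat_eq0 fC) [f_sr f_paths]; have [fD _] := fC.
have f_ur : f (psi v r ur) = 0 by rewrite -e_sr.
have f_psi := inC_psi_facet ur_rho ur_gt0 u1_rho fC f_ur.
exists (f (psi v r u1)); apply: dualR_eq_Pi_rho => // a.
have [E [e sE E_rho]] := path_spec (hd a, tl a).
apply: (dualR_arrow_value fD f_psi e sE E_rho).
by apply: (inC_vecA_flatten_eq0 fC f_paths); rewrite mem_enum.
Qed.

Lemma Pi_rho_perfect_matching rho : perfect_matching v D' (Pi_rho R rho).
Proof.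
have [S [Pi_S face_ray]] := exists_Pi_rho_face rho.
have Pi_prim := Pi_rho_primitive rho; have [_ [Pi_nz _]] := Pi_prim.
split=> //; exists (fun f => inC v D' f /\ f (vecA S) = 0).
have Pi_face : inC v D' (Pi_rho R rho) /\ Pi_rho R rho (vecA S) = 0 by split; [exact: Pi_rho_inC|].
split=> //; split; first exact: face_of_C_vecA.
by exists (Pi_rho R rho); split=> // f [fC fS]; apply: face_ray.
Qed.

Lemma Pi_rho_extremal rho : extremal_at v D' (Pi_rho R rho) rho.
Proof. by move=> u; split; [exact: ZQ_psi|]. Qed.

Lemma supp_Pi_rho rho (a : arr) : supp (Pi_rho R rho) a <-> x_divides rho (lab a).
Proof.
have lab_ge0 : effective (lab a) by case: (arrow_irr a) => [[]].
rewrite /supp /Pi_rho /= ltr0z; split=> [lab_gt0|[E' [E'_ge0 lab_E']]].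
  exists (fun rho' => lab a rho' - (rho' == rho)%:R); split=> [rho'|rho']; last by ring.
  by have [->|_] := eqVneq rho' rho; rewrite ?subr0 ?lab_ge0 //; lia.
by have := lab_E' rho; have := E'_ge0 rho; rewrite eqxx; lia.
Qed.

End Quiver.

Theorem proposition2p12 (R : realType) (n d : nat) (v : 'I_d -> 'I_n -> int)
    (r : nat) (D' : 'I_r.+1 -> 'I_d -> int) :
  toric_cone_data R v ->
  principal v (D' ord0) ->
  (forall i j : 'I_r.+1, i != j -> ~ principal v (fun rho => D' i rho - D' j rho)) ->
  forall rho : 'I_d,
    perfect_matching_extremal v D' (@Pi_rho R d r rho) /\
    extremal_at v D' (@Pi_rho R d r rho) rho /\
    (forall a : arrow v D', supp (@Pi_rho R d r rho) a <-> x_divides rho (lab a)).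
Proof.
move=> toric _ distinct rho.
have extremal := Pi_rho_extremal (D' := D') toric distinct rho.
split; first by split; [exact: Pi_rho_perfect_matching|exists rho].
by split=> // a; exact: supp_Pi_rho.
Qed.
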